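(* Let $M,K,N\in\mathbb{N}$ with $K\le M+1$, let $w_1,w_2\in\mathbb{N}$ with $\frac{2\pi}{w_2}\le\frac{2\pi}{w_1}$, let $f_1:\mathbb{R}\to\mathbb{R}$ be continuous and periodic with cycle length $\frac{2\pi}{w_1}$, let $\tau=\frac{2\pi}{w_2(M+1)}$, and let $T\subset[0,\frac{2\pi}{w_1}]$ be a set of $N$ times such that $X=\{(f_1(t),f_1(t+\tau),\dots,f_1(t+M\tau))^T:t\in T\}$ consists of $N$ points. Regard $X$ as an $N\times(M+1)$ matrix whose rows are these points, let $\lambda_1\ge\lambda_2\ge\dots\ge\lambda_N\ge0$ be the eigenvalues of $XX^T$ (with $\lambda_i=0$ for $i>M+1$), and let $\phi(X)\subset\mathbb{R}^K$ be the point cloud obtained by orthogonally projecting each point of $X$ onto its top $K$ principal components, i.e. the rows of $XV_K$ where $V_K$ consists of top $K$ right singular vectors of $X$. Let $\mathrm{score}(f_1|f_2)=\mathrm{mp}(\mathrm{dgm}_1(X))/\sqrt3$ and $\mathrm{score}_\phi(f_1|f_2)=\mathrm{mp}(\mathrm{dgm}_1(\phi(X)))/\sqrt3$. Then \[|\mathrm{score}(f_1|f_2)-\mathrm{score}_\phi(f_1|f_2)|\le\sqrt{\tfrac83}\,\Big(\sum_{i=K+1}^N\lambda_i^2\Big)^{1/4}.\]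
   Context: $\mathrm{dgm}_1(Y)$ denotes the 1-dimensional persistence diagram of the Vietoris–Rips filtration of a finite Euclidean point cloud $Y$, and $\mathrm{mp}(\cdot)$ the largest persistence (death minus birth) among its points. In the paper $\frac{2\pi}{w_2}$ is the cycle length of a more periodic time series $f_2$, $X$ is the conditional sliding windows embedding of $f_1$ given $f_2$, and the quotients are the conditional periodicity score and its PCA version. *)

From HB Require Import structures.
From mathcomp Require Import all_boot all_order all_algebra.
From mathcomp Require Import all_classical all_reals all_analysis.
Set Implicit Arguments. Unset Strict Implicit. Unset Printing Implicit Defensive.
Import Order.TTheory GRing.Theory Num.Theory.
Local Open Scope ring_scope.

Definition vr_edge (R : realType) (N : nat) (d : 'I_N -> 'I_N -> R) (s : R)
  (e : 'I_N * 'I_N) : bool :=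
  ((e.1 < e.2)%N && (d e.1 e.2 <= s)).

Definition vr_tri (R : realType) (N : nat) (d : 'I_N -> 'I_N -> R) (s : R)
  (x : 'I_N * 'I_N * 'I_N) : bool :=
  let: (i, j, k) := x in
  [&& (i < j)%N, (j < k)%N, d i j <= s, d i k <= s & d j k <= s].

Definition boundary1 (F : fieldType) (N : nat) (c : 'I_N * 'I_N -> F)
  (v : 'I_N) : F :=
  \sum_(e : 'I_N * 'I_N) c e * ((v == e.2)%:R - (v == e.1)%:R).

Definition tri_coeff (F : fieldType) (N : nat) (x : 'I_N * 'I_N * 'I_N)
  (e : 'I_N * 'I_N) : F :=
  let: (i, j, k) := x in
  (e == (j, k))%:R - (e == (i, k))%:R + (e == (i, j))%:R.

Definition boundary2 (F : fieldType) (N : nat) (a : 'I_N * 'I_N * 'I_N -> F)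
  (e : 'I_N * 'I_N) : F :=
  \sum_(x : 'I_N * 'I_N * 'I_N) a x * tri_coeff F x e.

(** The map H_1(VR_s; F) -> H_1(VR_t; F) induced by inclusion (s <= t) is
    nonzero iff some 1-cycle of VR_s is not a boundary in VR_t. *)
Definition H1_map_nonzero (F : fieldType) (R : realType) (N : nat)
  (d : 'I_N -> 'I_N -> R) (s t : R) : Prop :=
  exists c : 'I_N * 'I_N -> F,
    (forall e, ~~ vr_edge d s e -> c e = 0) /\
    (forall v, boundary1 c v = 0) /\
    ~ (exists a : 'I_N * 'I_N * 'I_N -> F,
         (forall x, ~~ vr_tri d t x -> a x = 0) /\
         (forall e, c e = boundary2 a e)).

(** mp(dgm_1): the largest persistence (death - birth) of a point of the
    1-dimensional VR persistence diagram (coefficients in F_2), computed from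
    the rank invariant: a bar [b,d) makes H_1(VR_s) -> H_1(VR_t) nonzero
    exactly for b <= s <= t < d, so the maximal bar length is the supremum of
    t - s over such pairs (0 for an empty diagram; sup set0 = 0). *)
Definition mp_dgm1 (R : realType) (N : nat) (d : 'I_N -> 'I_N -> R) : R :=
  sup [set u : R | exists s t : R,
        [/\ s <= t, H1_map_nonzero [the fieldType of 'F_2] d s t & u = t - s]].

Definition rowdist (R : realType) (N n : nat) (A : 'M[R]_(N, n)) (i j : 'I_N) : R :=
  Num.sqrt (\sum_(k < n) (A i k - A j k) ^+ 2).

Definition score (R : realType) (N n : nat) (A : 'M[R]_(N, n)) : R :=
  mp_dgm1 (rowdist A) / Num.sqrt 3.

Definition lam_ext (R : realType) (N : nat) (lam : 'I_N -> R) (k : nat) : R :=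
  match @insub nat (fun k => (k < N)%N) 'I_N k with
  | Some i => lam i
  | None => 0
  end.

From HB Require Import structures.
From mathcomp Require Import all_boot all_order all_algebra.
From mathcomp Require Import all_classical all_reals all_analysis.
From mathcomp Require Import lra ring.
Import Order.TTheory GRing.Theory Num.Theory numFieldNormedType.Exports.
Set Implicit Arguments. Unset Strict Implicit. Unset Printing Implicit Defensive.
Local Open Scope ring_scope.

(* Both scores are maximal bar lengths of Vietoris-Rips filtrations on the same
   index set, so it suffices to bound how much the pairwise distances move.
   Persistence is stable: if |dX - dY| <= e, a 1-cycle of VR_s(dX) that is not
   a boundary in VR_t(dX) is a 1-cycle of VR_(s+e)(dY) that is not a boundary
   in VR_(t-e)(dY), so the maximal bar length moves by at most 2e (bars are
   bounded since the full simplex is a cone, hence acyclic).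
   For P = V V^T, the squared distances of X and X V differ by u G u^T with
   u = e_i - e_j and G = X (1 - P) X^T, so by Cauchy-Schwarz the distances
   differ by at most sqrt (2 |G|_F).  As P commutes with X^T X,
   |G|_F^2 = tr ((X X^T)^2) - sum_(k < K) lam_k^2 = sum_(i >= K) lam_i^2, the
   trace of the square being read off the characteristic polynomial. *)

Lemma sumr_mul_delta (F : nzSemiRingType) (I : finType) (g : I -> F) (q : I) :
  \sum_k g k * (q == k)%:R = g q.
Proof.
rewrite (bigD1 q) //= eqxx mulr1 big1 ?addr0 // => k /negbTE.
by rewrite eq_sym => ->; rewrite mulr0.
Qed.

Lemma sumr_mul_delta2 (F : nzSemiRingType) (I J : finType) (g : I -> J -> F) p q :
  \sum_i \sum_j g i j * ((p, q) == (i, j))%:R = g p q.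
Proof.
rewrite pair_bigA -[RHS]/((fun e => g e.1 e.2) (p, q)) -(sumr_mul_delta _ (p, q)).
by apply: eq_bigr => -[].
Qed.

Section Chains.
Variables (F : fieldType) (N : nat).

Lemma boundary1E (c : 'I_N * 'I_N -> F) v :
  boundary1 c v = \sum_i c (i, v) - \sum_k c (v, k).
Proof.
rewrite /boundary1.
rewrite (eq_bigr (fun e => c (e.1, e.2) * ((v == e.2)%:R - (v == e.1)%:R))); last by case.
rewrite -(pair_bigA _ (fun i k => c (i, k) * ((v == k)%:R - (v == i)%:R))) /=.
under eq_bigr => i _ do rewrite (eq_bigr _ (fun k _ => mulrBr _ _ _)) sumrB sumr_mul_delta.
rewrite sumrB; congr (_ - _).
rewrite (eq_bigr (fun i => (\sum_k c (i, k)) * (v == i)%:R)) ?sumr_mul_delta //.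
by move=> i _; rewrite mulr_suml.
Qed.

Lemma boundary2E (a : 'I_N * 'I_N * 'I_N -> F) p q :
  boundary2 a (p, q) = \sum_i a (i, p, q) - \sum_j a (p, j, q) + \sum_k a (p, q, k).
Proof.
have -> : boundary2 a (p, q) = \sum_i \sum_j \sum_k
    (a (i, j, k) * ((p, q) == (j, k))%:R - a (i, j, k) * ((p, q) == (i, k))%:R
     + a (i, j, k) * ((p, q) == (i, j))%:R).
  by rewrite pair_bigA pair_bigA; apply: eq_bigr => -[[i j] k] _; rewrite mulrDr mulrBr.
under eq_bigr => i _ do under eq_bigr => j _ do rewrite big_split sumrB /=.
under eq_bigr => i _ do rewrite big_split sumrB /=.
rewrite big_split sumrB /=; congr (_ - _ + _).
- by apply: eq_bigr => i _; rewrite sumr_mul_delta2.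
- rewrite -(sumr_mul_delta2 (fun i k => \sum_j a (i, j, k)) p q).
  by apply: eq_bigr => i _; rewrite exchange_big; apply: eq_bigr => k _; rewrite mulr_suml.
- rewrite -(sumr_mul_delta2 (fun i j => \sum_k a (i, j, k)) p q).
  by apply: eq_bigr => i _; apply: eq_bigr => j _; rewrite mulr_suml.
Qed.
End Chains.

Section Cone.
Variables (F : fieldType) (n : nat) (c : 'I_n.+1 * 'I_n.+1 -> F).
Hypothesis c_increasing : forall e : 'I_n.+1 * 'I_n.+1, ~~ (e.1 < e.2)%N -> c e = 0.
Hypothesis c_cycle : forall v, boundary1 c v = 0.

(* The cone with apex [ord0]; edges through the apex are left out, the cycle
   condition on [c] puts them back in the boundary. *)
Definition cone_chain (x : 'I_n.+1 * 'I_n.+1 * 'I_n.+1) : F :=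
  let: (i, j, k) := x in if (i == ord0) && (j != ord0) then c (j, k) else 0.

Lemma cone_chain_increasing (i j k : 'I_n.+1) :
  ~~ ((i < j) && (j < k))%N -> cone_chain (i, j, k) = 0.
Proof.
rewrite /cone_chain; case: eqP => [-> | _] //=; case: eqP => [_ | /eqP j0] //= ijk.
rewrite c_increasing //=; apply: contra ijk => ->.
by rewrite andbT lt0n; apply: contra j0 => /eqP j0; apply/eqP/val_inj.
Qed.

Lemma boundary2_cone_chain e : boundary2 cone_chain e = c e.
Proof.
case: e => p q; rewrite boundary2E.
have cone_chain_off_apex (i j k : 'I_n.+1) : i != ord0 -> cone_chain (i, j, k) = 0.
  by rewrite /cone_chain => /negbTE ->.
have in_eq_out v : \sum_k c (v, k) = \sum_j c (j, v).
  by apply/eqP; rewrite eq_sym -subr_eq0 -boundary1E c_cycle.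
have [-> | p0] := eqVneq p ord0; last first.
  rewrite [X in _ - X]big1 => [|j _]; last exact: cone_chain_off_apex.
  rewrite [X in _ + X]big1 => [|k _]; last exact: cone_chain_off_apex.
  rewrite subr0 addr0 (bigD1 ord0) //= big1 ?addr0 => [|i]; last exact: cone_chain_off_apex.
  by rewrite /cone_chain p0.
have -> : \sum_k cone_chain (ord0, q, k) = \sum_j c (j, q).
  rewrite -in_eq_out; have [-> | q0] := eqVneq q ord0.
    rewrite in_eq_out big1 => [|k _]; last by rewrite /cone_chain eqxx.
    by rewrite big1 // => j _; rewrite c_increasing.
  by apply: eq_bigr => k _; rewrite /cone_chain eqxx q0.
rewrite big1 => [|i _]; last by rewrite /cone_chain eqxx andbF.
rewrite [X in _ - X](bigD1 ord0) //= [X in _ + X](bigD1 ord0) //=.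
rewrite !add0r (eq_bigr (fun j => c (j, q))) => [|j ->] //.
by rewrite addrCA addNr addr0.
Qed.
End Cone.

Section VietorisRips.
Variables (F : fieldType) (R : realType) (N : nat).
Implicit Types (d dX dY : 'I_N -> 'I_N -> R) (e s t : R).

Lemma H1_map_nonzero_shift dX dY e s t :
  (forall i j, `|dX i j - dY i j| <= e) ->
  H1_map_nonzero F dX s t -> H1_map_nonzero F dY (s + e) (t - e).
Proof.
move=> dXY [c [c_supp [c_cycle c_nonbd]]]; exists c; split; [|split=> //].
- move=> x x_out; apply: c_supp; apply: contra x_out.
  rewrite /vr_edge => /andP[-> dx] /=.
  have := dXY x.1 x.2; rewrite ler_norml => /andP[? ?]; lra.
- move=> [a [a_supp c_bd]]; apply: c_nonbd; exists a; split => // x x_out.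
  apply: a_supp; apply: contra x_out; case: x => [[i j] k] /=.
  case/and5P => -> -> dij dik djk /=.
  have := dXY i j; have := dXY i k; have := dXY j k.
  rewrite !ler_norml => /andP[? ?] /andP[? ?] /andP[? ?].
  apply/and3P; split; lra.
Qed.

Lemma H1_map_zero_of_diameter d s t :
  (forall i j, d i j <= t) -> ~ H1_map_nonzero F d s t.
Proof.
move=> d_le [c [c_supp [c_cycle []]]].
case: N d c d_le c_supp c_cycle => [|n] d c d_le c_supp c_cycle.
  by exists (fun _ => 0); split => // -[[] //].
have c_increasing (x : 'I_n.+1 * 'I_n.+1) : ~~ (x.1 < x.2)%N -> c x = 0.
  by move=> x_dec; rewrite c_supp // /vr_edge (negbTE x_dec).
exists (cone_chain c); split=> [[[i j] k] /= | x]; last by rewrite boundary2_cone_chain.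
by rewrite !d_le !andbT; apply: cone_chain_increasing.
Qed.

Lemma H1_map_zero_of_lt0 d s t :
  (forall i j, 0 <= d i j) -> s < 0 -> ~ H1_map_nonzero F d s t.
Proof.
move=> d_ge0 s_lt0 [c [c_supp [_ []]]]; exists (fun _ => 0); split => // e.
rewrite /boundary2 big1 => [|x _]; last by rewrite mul0r.
apply: c_supp; rewrite /vr_edge negb_and -ltNge.
by rewrite (lt_le_trans s_lt0 (d_ge0 _ _)) orbT.
Qed.

End VietorisRips.

Section Persistence.
Variables (R : realType) (N : nat).
Implicit Types (d dX dY : 'I_N -> 'I_N -> R).

Definition H1_persistences d : set R :=
  [set u : R | exists s t : R,
    [/\ s <= t, H1_map_nonzero [the fieldType of 'F_2] d s t & u = t - s]].

Lemma mp_dgm1E d : mp_dgm1 d = sup (H1_persistences d).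
Proof. by []. Qed.

Lemma H1_persistences_ubound d :
  (forall i j, 0 <= d i j) -> has_ubound (H1_persistences d).
Proof.
move=> d_ge0; pose diam := \sum_(p : 'I_N * 'I_N) d p.1 p.2.
exists diam => _ [s [t [_ H1st ->]]].
have s_ge0 : 0 <= s.
  by rewrite leNgt; apply/negP => s_lt0; exact: H1_map_zero_of_lt0 d_ge0 s_lt0 H1st.
suff t_lt : t < diam by apply: ltW; apply: le_lt_trans t_lt; rewrite lerBlDr lerDl.
rewrite ltNge; apply/negP => diam_le; apply: (H1_map_zero_of_diameter _ H1st) => i j.
apply: le_trans diam_le; rewrite /diam (bigD1 (i, j)) //= lerDl.
by apply: sumr_ge0 => p _.
Qed.

Lemma mp_dgm1_ge0 d : (forall i j, 0 <= d i j) -> 0 <= mp_dgm1 d.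
Proof.
move=> d_ge0; rewrite mp_dgm1E.
have [-> | /set0P [u du]] := eqVneq (H1_persistences d) set0; first by rewrite sup0.
apply: le_trans (ub_le_sup (H1_persistences_ubound d_ge0) du).
by case: du => s [t [st _ ->]]; rewrite subr_ge0.
Qed.

Lemma mp_dgm1_le dX dY e :
  (forall i j, 0 <= dY i j) -> 0 <= e ->
  (forall i j, `|dX i j - dY i j| <= e) ->
  mp_dgm1 dX <= mp_dgm1 dY + 2 * e.
Proof.
move=> dY_ge0 e_ge0 dXY.
have mpY_ge0 := mp_dgm1_ge0 dY_ge0.
rewrite mp_dgm1E.
have [-> | /set0P X_nonempty] := eqVneq (H1_persistences dX) set0.
  by rewrite sup0; lra.
apply: ge_sup => // _ [s [t [_ H1st ->]]].
have [short | long] := lerP (t - s) (2 * e); first lra.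
have Yu : H1_persistences dY ((t - e) - (s + e)).
  by exists (s + e), (t - e); split; [lra | exact: H1_map_nonzero_shift H1st |].
have := ub_le_sup (H1_persistences_ubound dY_ge0) Yu; rewrite -mp_dgm1E; lra.
Qed.

Lemma mp_dgm1_lipschitz dX dY e :
  (forall i j, 0 <= dX i j) -> (forall i j, 0 <= dY i j) ->
  (forall i j, `|dX i j - dY i j| <= e) -> 0 <= e ->
  `|mp_dgm1 dX - mp_dgm1 dY| <= 2 * e.
Proof.
move=> dX_ge0 dY_ge0 dXY e_ge0.
have := mp_dgm1_le dY_ge0 e_ge0 dXY.
have := @mp_dgm1_le dY dX e dX_ge0 e_ge0 (fun i j => ltac:(by rewrite distrC)).
rewrite ler_norml; lra.
Qed.

End Persistence.

Lemma comp_poly_inj (R : idomainType) (q : {poly R}) :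
  (1 < size q)%N -> injective (comp_poly q).
Proof.
move=> q_gt1 p1 p2 p12; apply/eqP; rewrite -subr_eq0 -(comp_poly_eq0 _ q_gt1).
by rewrite comp_polyB p12 subrr.
Qed.

Section CharPoly.
Variables (R : comNzRingType) (n : nat).
Implicit Types A : 'M[R]_n.

Lemma char_poly_sqr A : char_poly (A *m A) \Po 'X^2 = char_poly A * char_poly (- A).
Proof.
set B := map_mx polyC A.
have sqr_factor : map_mx (comp_poly 'X^2) (char_poly_mx (A *m A)) =
                  ('X%:M - B) *m ('X%:M + B).
  rewrite /char_poly_mx map_mxB map_scalar_mx /= comp_polyX.
  have -> : map_mx (comp_poly 'X^2) (map_mx polyC (A *m A)) = B *m B.
    by rewrite -map_mxM; apply/matrixP => i j; rewrite !mxE comp_polyC.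
  rewrite mulmxBl !mulmxDr -scalar_mxM -expr2 mul_scalar_mx mul_mx_scalar.
  by rewrite opprD addrA addrK.
rewrite /char_poly -det_map_mx sqr_factor det_mulmx; congr (_ * _).
by rewrite /char_poly_mx map_mxN opprK.
Qed.

Lemma char_poly_opp A : char_poly (- A) = (-1) ^+ n * (char_poly A \Po - 'X).
Proof.
rewrite /char_poly -det_map_mx -detZ scaleN1r; congr (\det _).
rewrite /char_poly_mx map_mxB map_scalar_mx /= comp_polyX map_mxN.
have -> : map_mx (comp_poly (- 'X)) (map_mx polyC A) = map_mx polyC A.
  by apply/matrixP => i j; rewrite !mxE comp_polyC.
have -> : (- 'X)%:M = - ('X%:M) :> 'M[{poly R}]_n by apply/matrixP => i j; rewrite !mxE mulNrn.
by rewrite opprB !opprK addrC.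
Qed.

End CharPoly.

(* [char_poly (C *m C) \Po 'X^2 = char_poly C * char_poly (- C)] depends only on
   [char_poly C], so [C *m C] and the square of [diag_mx lam] have the same
   characteristic polynomial, hence the same trace. *)
Lemma mxtrace_sqr_char_poly (R : idomainType) n (C : 'M[R]_n) (lam : 'I_n -> R) :
  char_poly C = \prod_(i < n) ('X - (lam i)%:P) ->
  \tr (C *m C) = \sum_i lam i ^+ 2.
Proof.
move=> charC; set D := diag_mx (\row_i lam i).
have charD : char_poly D = \prod_(i < n) ('X - (lam i)%:P).
  rewrite char_poly_trig ?diag_mx_is_trig //; apply: eq_bigr => i _.
  by rewrite !mxE eqxx.
have charCD : char_poly (C *m C) = char_poly (D *m D).
  apply: (@comp_poly_inj _ 'X^2); first by rewrite size_polyXn.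
  by rewrite /= !char_poly_sqr !char_poly_opp charC charD.
have -> : \sum_i lam i ^+ 2 = \tr (D *m D).
  by rewrite mulmx_diag mxtrace_diag; apply: eq_bigr => i _; rewrite !mxE expr2.
case: n C lam charC D charD charCD => [|n] C lam _ D _ charCD.
  by rewrite /mxtrace !big_ord0.
by apply: oppr_inj; rewrite -!char_poly_trace // charCD.
Qed.

Lemma cauchy_schwarz_sum (R : realFieldType) (I : finType) (f g : I -> R) :
  (\sum_k f k * g k) ^+ 2 <= (\sum_k f k ^+ 2) * (\sum_k g k ^+ 2).
Proof.
have lagrange : 0 <= \sum_a \sum_b (f a * g b - f b * g a) ^+ 2.
  by apply: sumr_ge0 => a _; apply: sumr_ge0 => b _; apply: sqr_ge0.
have prod_sqr : \sum_a \sum_b (f a * g b) ^+ 2 = (\sum_k f k ^+ 2) * (\sum_k g k ^+ 2).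
  rewrite mulr_suml; apply: eq_bigr => a _; rewrite mulr_sumr.
  by apply: eq_bigr => b _; rewrite exprMn.
have cross : \sum_a \sum_b (f a * g b * (f b * g a)) = (\sum_k f k * g k) ^+ 2.
  rewrite expr2 mulr_suml; apply: eq_bigr => a _; rewrite mulr_sumr.
  by apply: eq_bigr => b _; ring.
have expand : \sum_a \sum_b (f a * g b - f b * g a) ^+ 2 =
   \sum_a \sum_b (f a * g b) ^+ 2 + \sum_a \sum_b (f b * g a) ^+ 2
   - 2 * \sum_a \sum_b (f a * g b * (f b * g a)).
  rewrite -big_split /= mulr_sumr -sumrB; apply: eq_bigr => a _.
  rewrite -big_split /= mulr_sumr -sumrB; apply: eq_bigr => b _.
  ring.
move: lagrange; rewrite expand (exchange_big _ _ _ _ _ (fun a b => (f b * g a) ^+ 2)) /=.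
rewrite prod_sqr cross; lra.
Qed.

Definition sqnorm (R : nzRingType) n (y : 'rV[R]_n) : R := \sum_k y 0 k ^+ 2.

Definition sqfrobenius (R : nzRingType) m n (G : 'M[R]_(m, n)) : R :=
  \sum_i \sum_j G i j ^+ 2.

Lemma sqnormE (R : comNzRingType) n (y : 'rV[R]_n) : sqnorm y = (y *m y^T) 0 0.
Proof. by rewrite /sqnorm mxE; apply: eq_bigr => k _; rewrite mxE expr2. Qed.

Lemma sqfrobeniusE (R : comNzRingType) m n (G : 'M[R]_(m, n)) :
  sqfrobenius G = \tr (G *m G^T).
Proof.
apply: eq_bigr => i _; rewrite mxE; apply: eq_bigr => j _.
by rewrite mxE expr2.
Qed.

Lemma sqnorm_ge0 (R : realDomainType) n (y : 'rV[R]_n) : 0 <= sqnorm y.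
Proof. by apply: sumr_ge0 => k _; apply: sqr_ge0. Qed.

Lemma sqfrobenius_ge0 (R : realDomainType) m n (G : 'M[R]_(m, n)) : 0 <= sqfrobenius G.
Proof. by apply: sumr_ge0 => i _; apply: sumr_ge0 => j _; apply: sqr_ge0. Qed.

Lemma quadratic_form_sqr_le (R : realFieldType) n (u : 'rV[R]_n) (G : 'M[R]_n) :
  ((u *m G *m u^T) 0 0) ^+ 2 <= sqnorm u ^+ 2 * sqfrobenius G.
Proof.
have -> : (u *m G *m u^T) 0 0 = \sum_(p : 'I_n * 'I_n) (u 0 p.1 * u 0 p.2) * G p.1 p.2.
  rewrite mxE -(pair_bigA _ (fun a b => u 0 a * u 0 b * G a b)) exchange_big /=.
  apply: eq_bigr => b _; rewrite !mxE mulr_suml; apply: eq_bigr => a _; ring.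
have -> : sqnorm u ^+ 2 = \sum_(p : 'I_n * 'I_n) (u 0 p.1 * u 0 p.2) ^+ 2.
  rewrite -(pair_bigA _ (fun a b => (u 0 a * u 0 b) ^+ 2)) expr2 mulr_suml.
  by apply: eq_bigr => a _; rewrite mulr_sumr; apply: eq_bigr => b _; rewrite exprMn.
by rewrite /sqfrobenius pair_bigA; apply: cauchy_schwarz_sum.
Qed.

Lemma sqnorm_delta_sub (R : realFieldType) n (i j : 'I_n) :
  sqnorm (delta_mx 0 i - delta_mx 0 j : 'rV[R]_n) <= 2.
Proof.
have sum_delta (l : 'I_n) : \sum_k ((k == l)%:R : R) = 1.
  by rewrite (bigD1 l) //= eqxx big1 ?addr0 // => k /negbTE ->.
apply: (@le_trans _ _ (\sum_k (((k == i)%:R : R) + (k == j)%:R))).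
  apply: ler_sum => k _; rewrite !mxE /=.
  by case: (k == i); case: (k == j); rewrite /= ?subrr ?subr0 ?sub0r; lra.
by rewrite big_split /= !sum_delta.
Qed.

Lemma dist_sqrt_le (R : rcfType) (a b : R) : 0 <= a -> 0 <= b ->
  `|Num.sqrt a - Num.sqrt b| <= Num.sqrt `|a - b|.
Proof.
move=> a_ge0 b_ge0; rewrite -{2}(sqr_sqrtr a_ge0) -{2}(sqr_sqrtr b_ge0).
have := sqrtr_ge0 a; have := sqrtr_ge0 b.
move: (Num.sqrt a) (Num.sqrt b) => x y y_ge0 x_ge0.
rewrite -[`|x - y|]sqrtr_sqr ler_sqrt ?normr_ge0 //.
have [yx | xy] := lerP y x.
  by rewrite !ger0_norm ?subr_ge0; nra.
by rewrite !ler0_norm ?subr_le0; nra.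
Qed.

Lemma rowdistE (R : realType) N n (A : 'M[R]_(N, n)) i j :
  rowdist A i j = Num.sqrt (sqnorm ((delta_mx 0 i - delta_mx 0 j) *m A)).
Proof.
rewrite /rowdist /sqnorm mulmxBl -!rowE; congr (Num.sqrt _).
by apply: eq_bigr => k _; rewrite !mxE.
Qed.

Section PCAResidual.
Variables (R : comNzRingType) (N m K : nat) (X : 'M[R]_(N, m)) (V : 'M[R]_(m, K)).

Definition pca_residual := X *m (1%:M - V *m V^T) *m X^T.

Lemma sqnormB_pca (u : 'rV[R]_N) :
  sqnorm (u *m X) - sqnorm (u *m (X *m V)) = (u *m pca_residual *m u^T) 0 0.
Proof.
have -> : u *m pca_residual *m u^T =
    (u *m X) *m (u *m X)^T - (u *m (X *m V)) *m (u *m (X *m V))^T.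
  by rewrite /pca_residual mulmxBr mulmx1 !mulmxBl !mulmxBr !mulmxBl !trmx_mul !mulmxA.
by rewrite !sqnormE !mxE.
Qed.

Hypotheses (V_orthonormal : V^T *m V = 1%:M) (d : 'rV[R]_K)
  (V_eigen : (X^T *m X) *m V = V *m diag_mx d).

Lemma sqfrobenius_pca_residual :
  sqfrobenius pca_residual = \tr ((X *m X^T) *m (X *m X^T)) - \sum_k d 0 k ^+ 2.
Proof.
set P := V *m V^T; set A := X^T *m X; set Q := 1%:M - P.
have A_sym : A^T = A by rewrite /A trmx_mul trmxK.
have P_sym : P^T = P by rewrite /P trmx_mul trmxK.
have Q_sym : Q^T = Q by rewrite /Q linearB /= trmx1 P_sym.
have PA : P *m A = A *m P.
  have VA : V^T *m A = diag_mx d *m V^T.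
    by rewrite -A_sym -trmx_mul V_eigen trmx_mul tr_diag_mx.
  by rewrite /P -mulmxA VA mulmxA -V_eigen mulmxA.
have PP : P *m P = P by rewrite /P mulmxA -(mulmxA V) V_orthonormal mulmx1.
have QA : Q *m A = A *m Q by rewrite /Q mulmxBl mulmxBr mul1mx mulmx1 PA.
have QQ : Q *m Q = Q by rewrite /Q mulmxBl !mulmxBr !mul1mx mulmx1 PP subrr subr0.
rewrite sqfrobeniusE /pca_residual -/P -/Q !trmx_mul trmxK Q_sym !mulmxA.
have -> : \tr (X *m Q *m X^T *m X *m Q *m X^T) = \tr (A *m A *m Q).
  rewrite (_ : X *m Q *m _ *m _ *m _ *m _ = X *m (Q *m X^T *m X *m Q *m X^T));
    last by rewrite !mulmxA.
  rewrite mxtrace_mulC.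
  have -> : Q *m X^T *m X *m Q *m X^T *m X = Q *m A *m Q *m A by rewrite /A !mulmxA.
  by rewrite QA -(mulmxA A Q Q) QQ -(mulmxA A Q A) QA mulmxA.
rewrite /Q mulmxBr mulmx1 mxtraceD linearN /=.
have -> : \tr (A *m A) = \tr (X *m X^T *m (X *m X^T)).
  by rewrite /A -!mulmxA mxtrace_mulC -!mulmxA.
congr (_ - _); first by rewrite !mulmxA.
rewrite /P mulmxA -(mulmxA A A V) V_eigen mulmxA V_eigen.
rewrite mxtrace_mulC !mulmxA V_orthonormal mul1mx mulmx_diag mxtrace_diag.
by apply: eq_bigr => k _; rewrite mxE expr2.
Qed.

End PCAResidual.

Lemma rowdist_pca_le (R : realType) N m K (X : 'M[R]_(N, m)) (V : 'M[R]_(m, K)) i j :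
  `|rowdist X i j - rowdist (X *m V) i j| <=
    Num.sqrt (2 * Num.sqrt (sqfrobenius (pca_residual X V))).
Proof.
rewrite !rowdistE; set u := delta_mx 0 i - delta_mx 0 j.
apply: le_trans (dist_sqrt_le (sqnorm_ge0 _) (sqnorm_ge0 _)) _.
rewrite ler_sqrt ?mulr_ge0 ?sqrtr_ge0 // sqnormB_pca -sqrtr_sqr.
apply: (@le_trans _ _ (Num.sqrt (sqnorm u ^+ 2 * sqfrobenius (pca_residual X V)))).
  by rewrite ler_sqrt ?quadratic_form_sqr_le // mulr_ge0 ?sqr_ge0 ?sqfrobenius_ge0.
rewrite sqrtrM ?sqr_ge0 // sqrtr_sqr ger0_norm ?sqnorm_ge0 //.
by rewrite ler_wpM2r ?sqrtr_ge0 ?sqnorm_delta_sub.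
Qed.

Lemma lam_extE (R : realType) N (lam : 'I_N -> R) (i : 'I_N) : lam_ext lam i = lam i.
Proof.
rewrite /lam_ext; case: insubP => [i' _ i'i | ]; last by rewrite ltn_ord.
by congr (lam _); apply: val_inj.
Qed.

Lemma lam_ext_out (R : realType) N (lam : 'I_N -> R) k : (N <= k)%N -> lam_ext lam k = 0.
Proof. by move=> Nk; rewrite /lam_ext insubN // -leqNgt. Qed.

Lemma sum_lam_ext (R : realType) N K (lam : 'I_N -> R) (f : R -> R) : f 0 = 0 ->
  \sum_(k < K) f (lam_ext lam k) = \sum_(i < N | (i < K)%N) f (lam i).
Proof.
move=> f0; set g := fun k => f (lam_ext lam k).
rewrite (eq_bigr (fun i : 'I_N => g i)) => [|i _]; last by rewrite /g lam_extE.
rewrite (big_ord_widen (K + N) g (leq_addr N K)).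
rewrite (big_ord_widen_cond (K + N) (fun i => i < K)%N g (leq_addl K N)).
rewrite (bigID (fun i : 'I_(K + N) => (i < N)%N)) /= [X in _ + X]big1 ?addr0 //.
by move=> i /andP[_]; rewrite -leqNgt => /lam_ext_out; rewrite /g => ->.
Qed.

Lemma sqrt_eight_thirds (R : rcfType) (y : R) : 0 <= y ->
  2 * Num.sqrt (2 * y) / Num.sqrt 3 = Num.sqrt (8 / 3) * Num.sqrt y.
Proof.
move=> y_ge0; have sqrt2_sqr : Num.sqrt 2 * Num.sqrt 2 = 2 :> R.
  by rewrite -expr2 sqr_sqrtr ?ler0n.
have -> : (8 / 3 : R) = 2 * 2 * (2 * 3^-1) by rewrite mulrA; congr (_ * _); ring.
rewrite !sqrtrM ?mulr_ge0 ?invr_ge0 ?ler0n // sqrtrV ?ler0n // sqrt2_sqr.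
ring.
Qed.

Lemma sqfrobenius_pca_residual_tail (R : realType) N m K
    (X : 'M[R]_(N, m)) (V : 'M[R]_(m, K)) (lam : 'I_N -> R) :
  V^T *m V = 1%:M ->
  (X^T *m X) *m V = V *m diag_mx (\row_(k < K) lam_ext lam k) ->
  char_poly (X *m X^T) = \prod_(i < N) ('X - (lam i)%:P) ->
  sqfrobenius (pca_residual X V) = \sum_(i < N | (K <= i)%N) lam i ^+ 2.
Proof.
move=> V_orthonormal V_eigen charXXt.
rewrite (sqfrobenius_pca_residual V_orthonormal V_eigen) (mxtrace_sqr_char_poly charXXt).
under [X in _ - X]eq_bigr => k _ do rewrite mxE.
rewrite (@sum_lam_ext _ _ _ lam (fun x => x ^+ 2)) ?expr0n //.
rewrite (bigID (fun i : 'I_N => (i < K)%N)) /=.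
by rewrite [LHS]addrC addKr; apply: eq_bigl => i; rewrite -leqNgt.
Qed.

Theorem mainTheorem4 (R : realType) (M K N w1 w2 : nat) (f1 : R -> R)
  (t : 'I_N -> R) (lam : 'I_N -> R) (V : 'M[R]_(M.+1, K)) :
  (K <= M.+1)%N -> (0 < w1)%N -> (0 < w2)%N ->
  2 * (pi : R) / w2%:R <= 2 * (pi : R) / w1%:R ->
  continuous f1 ->
  (forall x : R, f1 (x + 2 * (pi : R) / w1%:R) = f1 x) ->
  let tau := 2 * (pi : R) / (w2%:R * (M.+1)%:R) in
  let X := \matrix_(i < N, j < M.+1) f1 (t i + (j : nat)%:R * tau) in
  injective t ->
  (forall i, 0 <= t i <= 2 * (pi : R) / w1%:R) ->
  (forall i j, row i X = row j X -> i = j) ->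
  (forall i j : 'I_N, (i <= j)%N -> lam j <= lam i) ->
  (forall i, 0 <= lam i) ->
  char_poly (X *m X^T) = \prod_(i < N) ('X - (lam i)%:P) ->
  V^T *m V = 1%:M ->
  (X^T *m X) *m V = V *m diag_mx (\row_(k < K) lam_ext lam k) ->
  `| score X - score (X *m V) |
    <= Num.sqrt (8 / 3) * Num.sqrt (Num.sqrt (\sum_(i < N | (K <= i)%N) lam i ^+ 2)).
Proof.
move=> _ _ _ _ _ _ tau X _ _ _ _ _ charXXt V_orthonormal V_eigen.
have mp_close := mp_dgm1_lipschitz (fun i j => sqrtr_ge0 _) (fun i j => sqrtr_ge0 _)
  (rowdist_pca_le X V) (sqrtr_ge0 _).
rewrite /score -mulrBl normrM [`|_^-1|]ger0_norm ?invr_ge0 ?sqrtr_ge0 //.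
rewrite -(sqfrobenius_pca_residual_tail V_orthonormal V_eigen charXXt).
by rewrite -sqrt_eight_thirds ?sqrtr_ge0 // ler_pM2r ?invr_gt0 ?sqrtr_gt0 ?ltr0n.
Qed.
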